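(* Let $G$ be an $(r,t,a_0)$-staircase graph, let $n=|E(G)|$. (1) Let $\mathcal{C}_2(G)$ be the binary code of $G$, of dimension $k$. Then $\mathcal{C}_2(G)$ is an $(n,k,r,t)_{\mathrm{seq}}$ code if and only if $G$ has girth at least $t+1$. (2) If $G$ has girth at least $t+1$, then every code over $\mathbb{F}_q$ associated to $G$ (of dimension $k$, say) is an $(n,k,r,t)_{\mathrm{seq}}$ code.
   Context: Staircase graph: Let $r\ge 2$ and $t\ge 2$ be integers, $s=\lfloor (t-1)/2\rfloor$, and $a_0$ a positive integer; if $t$ is odd assume $t\ge 3$. An $(r,t,a_0)$-staircase graph is a finite simple graph $G$ whose vertex set is a disjoint union $\{v_\infty\}\cup V_0\cup V_1\cup\cdots\cup V_s$ such that: $|V_0|=a_0$ and $v_\infty$ is adjacent to every vertex of $V_0$ and to no other vertex; for each $i$ with $0\le i\le s-1$ (if $t$ is even) or $0\le i\le s-2$ (if $t$ is odd), every vertex of $V_i$ has exactly $r$ neighbours in $V_{i+1}$ and every vertex of $V_{i+1}$ has exactly one neighbour in $V_i$; if $t$ is even, every vertex of $V_s$ has exactly $r$ neighbours in $V_s$; if $t$ is odd, every vertex of $V_{s-1}$ has exactly $r$ neighbours in $V_s$ and every vertex of $V_s$ has exactly $r+1$ neighbours in $V_{s-1}$; and there are no other edges. Codes of a staircase graph: a code over $\mathbb{F}_q$ associated to $G$ is a linear code of length $|E(G)|$ (coordinates indexed by the edges) having a parity-check matrix $H$ with rows indexed by $V(G)\setminus\{v_\infty\}$ and columns indexed by $E(G)$,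 where $H_{v,e}\neq 0$ if and only if $e$ is incident with $v$. The binary code $\mathcal{C}_2(G)$ of $G$ is the associated code over $\mathbb{F}_2$ (i.e. $H$ is the $0/1$ vertex–edge incidence matrix with the row of $v_\infty$ deleted). Girth: length of a shortest cycle ($\infty$ if there is none). Sequential-recovery LRC: an $(n,k,r,t)_{\mathrm{seq}}$ code is an $[n,k]$ linear code $\mathcal{C}\subseteq\mathbb{F}_q^n$ such that for every $E\subseteq[n]$ with $1\le|E|=u\le t$ there is an ordering $\ell_1,\dots,\ell_u$ of $E$ and sets $R_j\subseteq[n]$, $|R_j|\le r$, $R_j\cap\{\ell_j,\dots,\ell_u\}=\emptyset$, with coefficients $a_{j,i}\in\mathbb{F}_q$ such that $c_{\ell_j}=\sum_{i\in R_j}a_{j,i}c_i$ for all $c\in\mathcal{C}$, $j\in[u]$. *)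

From HB Require Import structures.
From mathcomp Require Import all_boot all_order all_algebra.
Set Implicit Arguments. Unset Strict Implicit. Unset Printing Implicit Defensive.
Import GRing.Theory.
Local Open Scope ring_scope.

(* A finite simple graph is a symmetric irreflexive relation [adj] on a
   finType [V].  Its edges are the 2-element vertex sets {u,v} with adj u v. *)
Definition is_edge (V : finType) (adj : rel V) (e : {set V}) : bool :=
  [exists u, exists v, adj u v && (e == [set u; v])].

Notation edge adj := {e : {set _} | is_edge adj e}.

Definition girth_at_least (V : finType) (adj : rel V) (g : nat) : Prop :=
  forall s : seq V, uniq s -> (3 <= size s)%N -> cycle adj s -> (g <= size s)%N.

(* Staircase graph, with the level function [lvl]: for v <> v_inf,
   v lies in V_(lvl v). *)
Definition staircase_levels (V : finType) (adj : rel V) (vinf : V)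
    (r t a0 : nat) (lvl : V -> nat) : Prop :=
  let s := (t.-1)./2 in
  let L := fun i : nat => [set v | (v != vinf) && (lvl v == i)] in
  [/\ (forall v, v != vinf -> (lvl v <= s)%N) /\ #|L 0%N| = a0,
      (forall v, adj vinf v = (v \in L 0%N)),
      (forall i, (if odd t then (i.+2 <= s)%N else (i < s)%N) ->
        (forall v, v \in L i -> #|[set u in L i.+1 | adj v u]| = r) /\
        (forall u, u \in L i.+1 -> #|[set v in L i | adj u v]| = 1%N)),
      (if odd t then
         (forall v, v \in L s.-1 -> #|[set u in L s | adj v u]| = r) /\
         (forall u, u \in L s -> #|[set v in L s.-1 | adj u v]| = r.+1)
       else
         forall v, v \in L s -> #|[set u in L s | adj v u]| = r) &
      (forall u v, u != vinf -> v != vinf -> adj u v ->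
        [\/ lvl v = (lvl u).+1, lvl u = (lvl v).+1 |
            [/\ ~~ odd t, lvl u = s & lvl v = s]])].

Definition staircase (V : finType) (adj : rel V) (vinf : V) (r t a0 : nat) : Prop :=
  exists lvl : V -> nat, staircase_levels adj vinf r t a0 lvl.

Definition has_parity_check (V : finType) (adj : rel V) (vinf : V)
    (F : fieldType) (H : V -> edge adj -> F)
    (C : {vspace {ffun edge adj -> F^o}}) : Prop :=
  forall c : {ffun edge adj -> F^o},
    (c \in C) = [forall v, (v != vinf) ==> (\sum_(e : edge adj) H v e * c e == 0)].

Definition associated_code (V : finType) (adj : rel V) (vinf : V)
    (F : fieldType) (C : {vspace {ffun edge adj -> F^o}}) : Prop :=
  exists H : V -> edge adj -> F,
    (forall v e, v != vinf -> (H v e != 0) = (v \in val e)) /\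
    has_parity_check vinf H C.

Definition binary_code (V : finType) (adj : rel V) (vinf : V)
    (C : {vspace {ffun edge adj -> ('F_2)^o}}) : Prop :=
  has_parity_check vinf (fun v (e : edge adj) => ((v \in val e) : nat)%:R : 'F_2) C.

Definition seq_recoverable (F : fieldType) (I : finType)
    (C : {vspace {ffun I -> F^o}}) (r t : nat) : Prop :=
  forall E : {set I}, (1 <= #|E| <= t)%N ->
    exists l : seq I,
      [/\ uniq l, [set x in l] = E &
      (* l = (l_1,...,l_u); for l_j = x, the tail {l_j,...,l_u} is drop (index x l) l *)
      forall x, x \in l ->
        exists R : {set I}, exists a : I -> F,
          [/\ (#|R| <= r)%N, [disjoint R & drop (index x l) l] &
              forall c, c \in C -> c x = \sum_(i in R) a i * c i]].

Definition seq_code (F : fieldType) (I : finType)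
    (C : {vspace {ffun I -> F^o}}) (n k r t : nat) : Prop :=
  [/\ #|I| = n, \dim C = k & seq_recoverable C r t].

From HB Require Import structures.
From mathcomp Require Import all_boot all_order all_algebra.
From mathcomp Require Import zify.
Set Implicit Arguments. Unset Strict Implicit. Unset Printing Implicit Defensive.
Import GRing.Theory.

(* Every vertex v other than v_inf has degree at most r + 1 in a staircase
   graph, and the parity check at v is supported on the edges at v.  So an
   erased edge that is the only erased edge at such a v is a combination of
   at most r intact coordinates.  If the girth exceeds t, a set of at most t
   edges contains no cycle, and following a trail through it as far as
   possible (starting at v_inf when v_inf is covered) ends at such a leaf
   v <> v_inf; recovering the leaf edge first and recursing on the remaining
   edges gives a recovery order.  Conversely, over F_2 the indicator of the
   edges of a cycle is a codeword, since each vertex meets 0 or 2 of them;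
   in a sequential recovery the first erased coordinate is a combination of
   intact ones, so no nonzero codeword is supported on at most t edges, and
   every cycle is longer than t. *)

Section SequentialRecovery.
Local Open Scope ring_scope.
Variables (F : fieldType) (I : finType) (C : {vspace {ffun I -> F^o}}) (r : nat).

Definition recoverable_from (x : I) (A : seq I) : Prop :=
  exists R : {set I}, exists a : I -> F,
    [/\ (#|R| <= r)%N, [disjoint R & A] &
        forall c, c \in C -> c x = \sum_(i in R) a i * c i].

Definition sequentially_recovers (l : seq I) : Prop :=
  forall x, x \in l -> recoverable_from x (drop (index x l) l).

Lemma sequentially_recovers_cons x l :
  recoverable_from x (x :: l) -> sequentially_recovers l ->
  sequentially_recovers (x :: l).
Proof.
move=> rec_x rec_l y; rewrite inE => /predU1P [->|y_l]; first by rewrite /= eqxx.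
have [<-|y_ne_x] := eqVneq x y; first by rewrite /= eqxx.
by rewrite /= (negbTE y_ne_x); exact: rec_l.
Qed.

Lemma seq_recoverable_codeword_eq0 t c :
  seq_recoverable C r t -> c \in C -> (#|support c| <= t)%N -> c = 0.
Proof.
move=> rec cC supp_t; apply/ffunP => i; rewrite ffunE; apply/eqP/contraT => ci.
pose E := [set i | c i != 0].
have E_gt0 : (0 < #|E|)%N by apply/card_gt0P; exists i; rewrite inE.
have E_range : (0 < #|E| <= t)%N by rewrite E_gt0 cardsE.
have [[|x l] [_ lE rec_l]] := rec E E_range.
  by move: E_gt0; rewrite -lE card_gt0; case/set0Pn => j; rewrite inE.
have [R [a [_ R_disj c_x]]] := rec_l x (mem_head x l).
rewrite /= eqxx drop0 in R_disj.
have : x \in E by rewrite -lE inE mem_head.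
rewrite inE c_x // big1 ?eqxx // => j j_R.
have : j \notin E by rewrite -lE inE (disjointFr R_disj j_R).
by rewrite inE negbK => /eqP ->; rewrite mulr0.
Qed.

End SequentialRecovery.

Section Graph.
Variables (V : finType) (adj : rel V).
Hypotheses (adj_sym : symmetric adj) (adj_irr : irreflexive adj).

Definition incident (v : V) : {set edge adj} := [set e : edge adj | v \in val e].

Lemma edge_ends (e : edge adj) : exists u w, adj u w /\ val e = [set u; w].
Proof.
by case: e => X /= /existsP [u /existsP [w /andP [uw /eqP ->]]]; exists u, w.
Qed.

Lemma edge_other (e : edge adj) x :
  x \in val e -> exists y, adj x y /\ val e = [set x; y].
Proof.
have [u [w [uw ->]]] := edge_ends e.
by case/set2P => ->; [exists w | exists u; rewrite adj_sym setUC].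
Qed.

Lemma edge_adj (e : edge adj) a b : val e = [set a; b] -> adj a b.
Proof.
move=> e_ab; have [y [ay e_ay]] : exists y, adj a y /\ val e = [set a; y].
  by apply: edge_other; rewrite e_ab set21.
have : b \in [set a; y] by rewrite -e_ay e_ab set22.
case/set2P => [b_a|-> //].
have : y \in [set a; b] by rewrite -e_ab e_ay set22.
by rewrite b_a setUid inE => /eqP y_a; rewrite y_a adj_irr in ay.
Qed.

Lemma card_incident v : #|incident v| <= #|[set u | adj v u]|.
Proof.
rewrite -(card_imset _ val_inj).
apply: leq_trans (leq_imset_card (fun u => [set v; u]) _).
apply/subset_leq_card/subsetP => X /imsetP [e]; rewrite inE => v_e ->.
by have [y [vy ->]] := edge_other v_e; apply/imsetP; exists y; rewrite ?inE.
Qed.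

Section Cycle.
Variable s : seq V.
Hypotheses (s_uniq : uniq s) (s_size : 2 < size s).

Definition cycle_edges : {set edge adj} :=
  [set e : edge adj | val e \in [set [set x; next s x] | x in s]].

Lemma next_next_neq x : x \in s -> next s (next s x) != x.
Proof.
case/rot_to => i q s_rot; rewrite -!(next_rot i s_uniq) s_rot.
have : uniq (x :: q) by rewrite -s_rot rot_uniq.
have : 2 < size (x :: q) by rewrite -s_rot size_rot.
case: q {s_rot} => [|y [|z q]] //= _; rewrite !inE !eqxx.
case/and4P => /norP [x_y /norP [x_z _]] _ _ _.
by rewrite [y == x]eq_sym (negbTE x_y) eq_sym.
Qed.

Lemma next_pair_inj : {in s &, injective (fun x => [set x; next s x])}.
Proof.
move=> x y x_s _ xy.
have : y \in [set x; next s x] by rewrite xy set21.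
have : x \in [set y; next s y] by rewrite -xy set21.
case/set2P => [//|x_ny] /set2P [<-//|y_nx].
by have := next_next_neq x_s; rewrite -y_nx -x_ny eqxx.
Qed.

Hypothesis s_cycle : cycle adj s.

Lemma val_cycle_edges : val @: cycle_edges = [set [set x; next s x] | x in s].
Proof.
apply/setP => X; apply/imsetP/idP => [[e]|X_pair]; first by rewrite inE => ? ->.
have /imsetP [x x_s X_def] := X_pair.
have X_edge : is_edge adj X.
  apply/existsP; exists x; apply/existsP; exists (next s x).
  by rewrite (next_cycle s_cycle x_s) X_def eqxx.
by exists (Sub X X_edge); rewrite ?inE.
Qed.

Lemma card_cycle_edges : #|cycle_edges| = size s.
Proof.
rewrite -(card_imset _ val_inj) val_cycle_edges (card_in_imset next_pair_inj).
exact/card_uniqP.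
Qed.

Lemma sum_incident_cycle_edges v :
  \sum_(e in cycle_edges) (v \in val e) = (v \in s).*2.
Proof.
rewrite -(big_imset (fun X : {set V} => (v \in X) : nat) (in2W val_inj)) /=.
rewrite val_cycle_edges big_imset /=; last exact: next_pair_inj.
rewrite -big_uniq //.
have sum_eq y : \sum_(x <- s) (x == y) = count_mem y s.
  by rewrite -sum1_count [RHS]big_mkcond; apply: eq_bigr => x _ /=; case: (x == y).
rewrite (eq_big_seq (fun x => (x == v) + (x == prev s v))) => [|x x_s].
  by rewrite big_split /= !sum_eq !count_uniq_mem // mem_prev addnn.
have nx_x : next s x != x.
  by apply: contraTneq (next_cycle s_cycle x_s) => ->; rewrite adj_irr.
(* [v] lies on the edge leaving [x] iff [x = v] or [x = prev s v]. *)
rewrite !inE -(can2_eq (prev_next s_uniq) (next_prev s_uniq)) !(eq_sym v).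
by have [<-|] := eqVneq x v; rewrite ?(negbTE nx_x).
Qed.

End Cycle.

Definition edge_rel (E : {set edge adj}) : rel V :=
  fun a b => [exists e in E, val e == [set a; b]].

Section Leaf.
Variables (vinf : V) (E : {set edge adj}).
Local Notation eR := (edge_rel E).

Lemma edge_rel_adj : subrel eR adj.
Proof. by move=> a b /exists_inP [e _ /eqP /edge_adj]. Qed.

Lemma edge_rel_cycle_size s : uniq s -> 2 < size s -> cycle eR s -> size s <= #|E|.
Proof.
move=> s_uniq s_size s_cycle.
rewrite -(card_cycle_edges s_uniq s_size (sub_cycle edge_rel_adj s_cycle)).
apply/subset_leq_card/subsetP => e; rewrite inE => /imsetP [x x_s e_def].
have /exists_inP [e' e'_E /eqP e'_def] := next_cycle s_cycle x_s.
by rewrite (_ : e = e') //; apply: val_inj; rewrite e_def e'_def.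
Qed.

Hypothesis E_acyclic : forall s, uniq s -> 2 < size s -> ~~ cycle eR s.

Lemma back_edge_head x q y :
  uniq (x :: q) -> path eR x q -> eR y x -> y \in q -> y = head x q.
Proof.
move=> xq_uniq xq_path yx y_q; case/splitPr: y_q xq_uniq xq_path.
case=> [//|z p1] p2 xq_uniq xq_path; exfalso.
have: cycle eR (x :: rcons (z :: p1) y).
  rewrite /cycle rcons_path last_rcons yx andbT rcons_path.
  by move: xq_path; rewrite cat_path => /andP [-> /andP [-> _]].
apply/negP/E_acyclic; last by rewrite /= size_rcons.
by move: xq_uniq; rewrite -cats1 -cat_cons -(cat1s y p2) catA cat_uniq => /andP [].
Qed.

(* Trails grow at their head [x].  By the last clause, [vinf] is already on
   a trail once it lies on an edge of [E], so no extension can add it. *)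
Definition trail (q : seq V) : bool :=
  if q is x :: p then
    [&& uniq q, path eR x p, p != [::], x != vinf &
        [exists e in E, vinf \in val e] ==> (vinf \in q)]
  else false.

Definition leaf_at (v : V) : Prop := exists e, E :&: incident v = [set e].

Lemma trail_uniq q : trail q -> uniq q.
Proof. by case: q => // x p /and5P []. Qed.

Lemma trail_extend q :
  trail q -> (exists2 v, v != vinf & leaf_at v) \/ exists y, trail (y :: q).
Proof.
case: q => [//|x [//|w p]] /and5P [xwp_uniq xwp_path _ x_vinf vinf_in].
have /andP [/exists_inP [e0 e0_E /eqP e0_xw] _] := xwp_path.
have [/exists_inP [e' e'_in e'_ne]|no_other] :=
  boolP [exists e in E :&: incident x, e != e0]; last first.
  left; exists x => //; exists e0; apply/setP => e; rewrite in_set1.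
  apply/idP/eqP => [e_in|->]; last by rewrite !inE e0_E e0_xw set21.
  by apply/eqP; apply: contraNT no_other => e_ne; apply/exists_inP; exists e.
right; move: e'_in; rewrite !inE => /andP [e'_E x_e'].
have [y [xy e'_xy]] := edge_other x_e'.
have yx : eR y x by apply/exists_inP; exists e'; rewrite // e'_xy setUC.
have y_new : y \notin [:: x, w & p].
  rewrite in_cons negb_or; apply/andP; split.
    by apply: contraTneq xy => ->; rewrite adj_irr.
  apply/negP => /(back_edge_head xwp_uniq xwp_path yx) /= y_w.
  by move/eqP: e'_ne; apply; apply: val_inj; rewrite e'_xy e0_xw y_w.
exists y; apply/and5P; split=> //.
- by rewrite cons_uniq y_new.
- by apply/andP.
- apply: contraNneq y_new => y_vinf; rewrite -y_vinf in vinf_in.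
  by apply: (implyP vinf_in); apply/exists_inP; exists e'; rewrite // e'_xy set22.
- by apply/implyP => /(implyP vinf_in) vinf_q; rewrite in_cons vinf_q orbT.
Qed.

Lemma trail_leaf q : trail q -> exists2 v, v != vinf & leaf_at v.
Proof.
have [n] := ubnP (#|V| - size q); elim: n q => // n IHn q q_n q_trail.
have [//|[y yq_trail]] := trail_extend q_trail.
have yq_size : size (y :: q) <= #|V|.
  by rewrite -(card_uniqP (trail_uniq yq_trail)) max_card.
by apply: IHn yq_trail; move: q_n yq_size => /=; lia.
Qed.

Lemma leaf_exists : E != set0 -> exists2 v, v != vinf & leaf_at v.
Proof.
move=> E_n0; have [/exists_inP [e e_E vinf_e]|no_vinf] :=
  boolP [exists e in E, vinf \in val e].
  have [y [vinf_y e_def]] := edge_other vinf_e.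
  have y_vinf : y != vinf by apply: contraTneq vinf_y => ->; rewrite adj_irr.
  apply: (@trail_leaf [:: y; vinf]); apply/and5P; split=> //.
  - by rewrite /= inE y_vinf.
  - by rewrite /= andbT; apply/exists_inP; exists e; rewrite // e_def setUC.
  - by apply/implyP; rewrite !inE eqxx orbT.
case/set0Pn: E_n0 => e e_E; have [u [w [uw e_def]]] := edge_ends e.
apply: (@trail_leaf [:: u; w]); apply/and5P; split=> //.
- by rewrite /= inE andbT; apply: contraTneq uw => ->; rewrite adj_irr.
- by rewrite /= andbT; apply/exists_inP; exists e; rewrite // e_def.
- apply: contraNneq no_vinf => u_vinf; apply/exists_inP.
  by exists e; rewrite // e_def u_vinf set21.
- by rewrite (negbTE no_vinf).
Qed.

End Leaf.

Lemma disjoint_incident_leaf (E : {set edge adj}) v (e : edge adj)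
    (l : seq (edge adj)) :
  E :&: incident v = [set e] -> {subset l <= E} ->
  [disjoint incident v :\ e & e :: l].
Proof.
move=> leaf_e l_E; rewrite disjoint_subset; apply/subsetP => x /setD1P [x_e x_v].
rewrite !inE negb_or x_e /=.
by apply: contraNN x_e => /l_E x_E; rewrite -in_set1 -leaf_e; exact/setIP.
Qed.

Lemma edge_rel_acyclic t (E : {set edge adj}) :
  girth_at_least adj t.+1 -> #|E| <= t ->
  forall s, uniq s -> 2 < size s -> ~~ cycle (edge_rel E) s.
Proof.
move=> girth E_t s s_uniq s_size; apply/negP => s_cycle.
have := girth s s_uniq s_size (sub_cycle (@edge_rel_adj E) s_cycle).
by rewrite ltnNge (leq_trans (edge_rel_cycle_size s_uniq s_size s_cycle) E_t).
Qed.

Section Recovery.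
Local Open Scope ring_scope.
Variables (vinf : V) (F : fieldType) (H : V -> edge adj -> F).
Variables (C : {vspace {ffun edge adj -> F^o}}) (r t : nat).
Hypothesis H_support : forall v e, v != vinf -> (H v e != 0) = (v \in val e).
Hypothesis H_check : has_parity_check vinf H C.
Hypothesis deg_le : forall v, v != vinf -> (#|incident v| <= r.+1)%N.
Hypothesis girth : girth_at_least adj t.+1.

Lemma parity_check_solve v (e : edge adj) : v != vinf -> e \in incident v ->
  exists a : edge adj -> F, forall c, c \in C ->
    c e = \sum_(i in incident v :\ e) a i * c i.
Proof.
move=> v_vinf v_e; exists (fun i => - (H v e)^-1 * H v i) => c.
have He : H v e != 0 by rewrite H_support //; move: v_e; rewrite inE.
rewrite H_check => /forallP/(_ v)/implyP/(_ v_vinf)/eqP.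
rewrite (bigID (mem (incident v))) /= [X in _ + X]big1 ?addr0; last first.
  move=> i v_i; suff /eqP -> : H v i == 0 by rewrite mul0r.
  by apply: contraNT v_i; rewrite H_support // inE.
rewrite (bigD1 e) //= => /eqP; rewrite addr_eq0 => /eqP /(congr1 ( *%R (H v e)^-1)).
rewrite mulKf // => ->; rewrite mulrN -mulNr mulr_sumr.
by apply: eq_big => [i|i _]; rewrite ?mulrA // !inE andbC.
Qed.

Lemma leaf_edge_recoverable (E : {set edge adj}) v (e : edge adj)
    (l : seq (edge adj)) :
  v != vinf -> E :&: incident v = [set e] -> {subset l <= E} ->
  recoverable_from C r e (e :: l).
Proof.
move=> v_vinf leaf_e l_E.
have /setIP [_ e_v] : e \in E :&: incident v by rewrite leaf_e set11.
have [a e_def] := parity_check_solve v_vinf e_v.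
exists (incident v :\ e), a; split=> //; last exact: disjoint_incident_leaf leaf_e l_E.
by move: (deg_le v_vinf); rewrite (cardsD1 e (incident v)) e_v.
Qed.

Lemma recovery_order (E : {set edge adj}) : (#|E| <= t)%N ->
  exists l, [/\ uniq l, [set x in l] = E & sequentially_recovers C r l].
Proof.
have [n] := ubnP #|E|; elim: n E => // n IHn E E_n E_t.
have [->|E_n0] := eqVneq E set0.
  by exists [::]; split=> //; apply/setP => x; rewrite !inE.
have [v v_vinf [e leaf_e]] := leaf_exists vinf (edge_rel_acyclic girth E_t) E_n0.
have /setIP [e_E _] : e \in E :&: incident v by rewrite leaf_e set11.
have [||l [l_uniq lE l_rec]] := IHn (E :\ e).
- by move: E_n; rewrite (cardsD1 e E) e_E.
- by rewrite (leq_trans _ E_t) // subset_leq_card // subD1set.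
have l_mem x : (x \in l) = (x != e) && (x \in E).
  by rewrite -in_setD1 -lE inE.
exists (e :: l); split.
- by rewrite cons_uniq l_mem eqxx.
- by apply/setP => x; rewrite !inE l_mem; case: eqP => // ->.
apply: sequentially_recovers_cons l_rec.
by apply: leaf_edge_recoverable v_vinf leaf_e _ => x; rewrite l_mem => /andP [].
Qed.

Lemma parity_check_seq_recoverable : seq_recoverable C r t.
Proof. by move=> E /andP [_ /recovery_order [l [l_uniq lE l_rec]]]; exists l. Qed.

End Recovery.

Section BinaryCode.
Local Open Scope ring_scope.
Variables (vinf : V) (C : {vspace {ffun edge adj -> ('F_2)^o}}).
Hypothesis C_binary : binary_code vinf C.

Lemma cycle_indicator_binary s : uniq s -> (2 < size s)%N -> cycle adj s ->
  [ffun e => (e \in cycle_edges s)%:R] \in C.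
Proof.
move=> s_uniq s_size s_cycle; rewrite C_binary; apply/forallP => v.
apply/implyP => _.
rewrite (eq_bigr (fun e => ((e \in cycle_edges s) * (v \in val e))%N%:R));
  last by move=> e _; rewrite ffunE -natrM mulnC.
rewrite -natr_sum.
have -> : (\sum_e (e \in cycle_edges s) * (v \in val e) =
           \sum_(e in cycle_edges s) (v \in val e))%N.
  rewrite [RHS]big_mkcond; apply: eq_bigr => e _.
  by case: (e \in cycle_edges s); rewrite ?mul1n.
have two0 : 2 = 0 :> ('F_2)^o by rewrite -(@Fp_nat_mod 2).
by rewrite sum_incident_cycle_edges // -muln2 natrM two0 mulr0.
Qed.

Lemma binary_code_girth r t : seq_recoverable C r t -> girth_at_least adj t.+1.
Proof.
move=> rec s s_uniq s_size s_cycle; rewrite leqNgt; apply/negP => s_t.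
have := seq_recoverable_codeword_eq0 rec
  (cycle_indicator_binary s_uniq s_size s_cycle).
rewrite (eq_card (B := cycle_edges s)) => [|e]; last first.
  by rewrite [in LHS]inE ffunE; case: (e \in _); rewrite ?oner_eq0 ?eqxx.
rewrite card_cycle_edges // => /(_ s_t)/ffunP.
have /card_gt0P [e e_in] : (0 < #|cycle_edges s|)%N.
  by rewrite card_cycle_edges // (ltn_trans _ s_size).
by move/(_ e); rewrite !ffunE e_in; apply/eqP/oner_neq0.
Qed.

End BinaryCode.

Section StaircaseDegree.
Variables (r t : nat) (vinf : V) (lvl : V -> nat).
Local Notation top := (t.-1)./2.
Local Notation level i := [set v | (v != vinf) && (lvl v == i)].
Local Notation nbrs_at v i := [set u in level i | adj v u].

Hypothesis t_gt1 : 1 < t.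
Hypothesis lvl_le_top : forall v, v != vinf -> lvl v <= top.
Hypothesis adj_vinf : forall v, adj vinf v = (v \in level 0).
Hypothesis step_deg : forall i, (if odd t then i.+2 <= top else i < top) ->
  (forall v, v \in level i -> #|nbrs_at v i.+1| = r) /\
  (forall u, u \in level i.+1 -> #|nbrs_at u i| = 1).
Hypothesis top_deg :
  if odd t then
    (forall v, v \in level top.-1 -> #|nbrs_at v top| = r) /\
    (forall u, u \in level top -> #|nbrs_at u top.-1| = r.+1)
  else forall v, v \in level top -> #|nbrs_at v top| = r.
Hypothesis adj_level : forall u v, u != vinf -> v != vinf -> adj u v ->
  [\/ lvl v = (lvl u).+1, lvl u = (lvl v).+1 |
      [/\ ~~ odd t, lvl u = top & lvl v = top]].

Variables (v : V) (v_vinf : v != vinf).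
Let v_level : v \in level (lvl v). Proof. by rewrite inE v_vinf eqxx. Qed.

Lemma card_nbrs_down : 0 < lvl v ->
  #|nbrs_at v (lvl v).-1| <= (if odd t && (lvl v == top) then r.+1 else 1).
Proof.
move: v_level (lvl_le_top v_vinf); case: (lvl v) => [//|i] /= v_i i_top _.
case t_odd: (odd t) step_deg top_deg => /= step top_odd; last first.
  by rewrite (step i i_top).2.
case: eqP => [i_eq|/eqP i_ne]; first by rewrite -i_eq in top_odd; rewrite top_odd.2.
by rewrite (step i _).2 //; rewrite ltn_neqAle i_ne.
Qed.

Lemma card_nbrs_up : #|nbrs_at v (lvl v).+1| <= (if lvl v == top then 0 else r).
Proof.
have := lvl_le_top v_vinf; rewrite leq_eqVlt => /orP [/eqP v_top|v_top].
  rewrite v_top eqxx leqn0 cards_eq0; apply/eqP/setP => u; rewrite !inE.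
  apply/negbTE/andP => [[/andP [u_vinf /eqP u_lvl] _]].
  by have := lvl_le_top u_vinf; rewrite u_lvl ltnn.
rewrite (ltn_eqF v_top).
case t_odd: (odd t) step_deg top_deg => step top_odd; last by rewrite (step _ _).1.
have [lt_top|ge_top] := ltnP (lvl v).+1 top; first by rewrite (step _ _).1.
have v_top1 : lvl v = top.-1 by lia.
have -> : (lvl v).+1 = top by lia.
by rewrite top_odd.1 // -v_top1.
Qed.

Lemma card_nbrs_flat :
  #|nbrs_at v (lvl v)| <= (if ~~ odd t && (lvl v == top) then r else 0).
Proof.
case: ifPn => [/andP [t_even /eqP v_top]|not_flat].
  by move: top_deg; rewrite (negbTE t_even) v_top => ->; rewrite // -v_top.
rewrite leqn0 cards_eq0; apply/eqP/setP => u; rewrite !inE.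
apply/negbTE/andP => [[/andP [u_vinf /eqP u_lvl] vu]].
case: (adj_level v_vinf u_vinf vu) => [||[t_even v_top _]]; [lia | lia |].
by rewrite t_even v_top eqxx in not_flat.
Qed.

Lemma nbrs_subset : [set u | adj v u] \subset
  (if lvl v == 0 then [set vinf] else nbrs_at v (lvl v).-1) :|:
  nbrs_at v (lvl v).+1 :|: nbrs_at v (lvl v).
Proof.
apply/subsetP => u; rewrite inE => vu.
have [u_eq|u_vinf] := eqVneq u vinf.
  rewrite u_eq in vu *; move: (adj_vinf v); rewrite adj_sym vu inE v_vinf.
  by move=> /esym /eqP ->; rewrite !inE eqxx.
case: (adj_level v_vinf u_vinf vu) => [u_up|v_up|[_ v_top u_top]].
- by rewrite !inE u_vinf vu u_up eqxx !orbT.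
- by rewrite !inE u_vinf vu v_up /= !inE u_vinf vu eqxx.
- by rewrite !inE u_vinf vu u_top v_top eqxx !orbT.
Qed.

Lemma staircase_degree : #|[set u | adj v u]| <= r.+1.
Proof.
apply: leq_trans (subset_leq_card nbrs_subset) _.
apply: leq_trans (leq_card_setU _ _) _.
apply: leq_trans (leq_add (leq_card_setU _ _) (leqnn _)) _.
have card_down :
    #|if lvl v == 0 then [set vinf] else nbrs_at v (lvl v).-1| <=
    (if lvl v == 0 then 1 else if odd t && (lvl v == top) then r.+1 else 1).
  by case: eqP => [_|/eqP v_n0]; rewrite ?cards1 // card_nbrs_down // lt0n.
have top_pos : odd t -> 0 < top by case: t t_gt1 => [|[|[|t']]].
move: card_down card_nbrs_up card_nbrs_flat top_pos.
by case: (odd t); case: eqP; case: eqP => /=; lia.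
Qed.

End StaircaseDegree.

End Graph.

Theorem mainTheorem5 (r t a0 : nat) (V : finType) (adj : rel V) (vinf : V) :
  (2 <= r)%N -> (2 <= t)%N -> (0 < a0)%N ->
  symmetric adj -> irreflexive adj ->
  staircase adj vinf r t a0 ->
  (forall C : {vspace {ffun edge adj -> ('F_2)^o}},
     binary_code vinf C ->
     (seq_code C #|{: edge adj}| (\dim C) r t <-> girth_at_least adj t.+1)) /\
  (girth_at_least adj t.+1 ->
   forall (F : finFieldType) (C : {vspace {ffun edge adj -> F^o}}),
     associated_code vinf C ->
     seq_code C #|{: edge adj}| (\dim C) r t).
Proof.
move=> _ t_gt1 _ adj_sym adj_irr [lvl [[lvl_le _] adj_vinf step_deg top_deg adj_lvl]].
have deg v : v != vinf -> (#|incident adj v| <= r.+1)%N.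
  move=> v_vinf; apply: leq_trans (card_incident adj_sym v) _.
  exact: (staircase_degree adj_sym t_gt1 lvl_le adj_vinf step_deg top_deg adj_lvl v_vinf).
split=> [C C_binary | girth F C [H [H_support H_check]]].
  split=> [[_ _ rec] | girth]; first exact: (binary_code_girth adj_irr C_binary rec).
  split=> //; apply: (parity_check_seq_recoverable adj_sym adj_irr _ C_binary) => //.
  by move=> v e _; case: (v \in val e); rewrite ?oner_eq0.
split=> //.
exact: (parity_check_seq_recoverable adj_sym adj_irr H_support H_check deg girth).
Qed.
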